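(* (i) For $g\ge1$, $H_0(\mathsf{Sp}(2g,2),Y)=0$ and $H_0(\mathsf{Sp}(2g,2),U)=0$. (ii) For $g\ge2$, $H_0(\mathsf{Sp}(2g,2),Z)=0$ and $H_0(\mathsf{Sp}(2g,2),\mathfrak{sp}(2g,2))=0$.
   Context: $\mathsf{Sp}(2g,2)$ is the symplectic group over $\mathbb F_2$ for the form $J=\begin{pmatrix}0&I\\-I&0\end{pmatrix}$, $U=\mathbb F_2^{2g}$ its natural module. $\mathfrak{sp}(2g,2)$ is the $\mathbb F_2$-space of matrices $\begin{pmatrix}\mathrm a&\mathrm b\\\mathrm c&\mathrm a^t\end{pmatrix}$ over $\mathbb F_2$ with $\mathrm b,\mathrm c$ symmetric $g\times g$, with $\mathsf{Sp}(2g,2)$ acting by conjugation. $Y\subseteq\mathfrak{sp}(2g,2)$ is the submodule of such matrices with $\mathsf{Diag}(\mathrm b)=\mathsf{Diag}(\mathrm c)=0$ and $\mathsf{Tr}(\mathrm a)=0$, and $Z=\mathfrak{sp}(2g,2)/Y$ (of dimension $2g+1$). $H_0(G,M)$ denotes the coinvariants $M/\langle gm-m\rangle$. *)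

From HB Require Import structures.
From mathcomp Require Import all_boot all_order all_algebra all_fingroup.
Set Implicit Arguments. Unset Strict Implicit. Unset Printing Implicit Defensive.
Import GRing.Theory.
Local Open Scope ring_scope.

(* All matrices are over F_2; 2g x 2g matrices have type 'M['F_2]_(g + g),
   so that they split into g x g blocks (ulsubmx, ursubmx, dlsubmx, drsubmx). *)

Definition Jform (g : nat) : 'M['F_2]_(g + g) :=
  block_mx 0 1%:M (- 1%:M) 0.

Definition inSp (g : nat) (A : 'M['F_2]_(g + g)) : bool :=
  A^T *m Jform g *m A == Jform g.

Definition symmetricb (g : nat) (b : 'M['F_2]_g) : bool := b^T == b.

Definition in_sp (g : nat) (X : 'M['F_2]_(g + g)) : bool :=
  [&& drsubmx X == (ulsubmx X)^T, symmetricb (ursubmx X)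
    & symmetricb (dlsubmx X)].

Definition diag_zero (g : nat) (b : 'M['F_2]_g) : bool :=
  [forall i, b i i == 0].

Definition in_Y (g : nat) (X : 'M['F_2]_(g + g)) : bool :=
  [&& in_sp X, diag_zero (ursubmx X), diag_zero (dlsubmx X)
    & \tr (ulsubmx X) == 0].

Definition conj_act (g : nat) (A X : 'M['F_2]_(g + g)) : 'M['F_2]_(g + g) :=
  A *m X *m invmx A.

Definition nat_act (g : nat) (A : 'M['F_2]_(g + g)) (u : 'cV['F_2]_(g + g))
  : 'cV['F_2]_(g + g) := A *m u.

(* H_0(G, M) = 0 for a submodule M (given by a predicate) of an F-vector space
   V on which G (given by a predicate on GT) acts via act: every element of M
   is a linear combination of elements  act x m - m  with x in G, m in M. *)
Definition coinv_zero (F : pzRingType) (GT : Type) (V : lmodType F)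
  (G : GT -> bool) (act : GT -> V -> V) (M : V -> bool) : Prop :=
  forall v, M v ->
    exists s : seq (F * GT * V),
      all (fun p => G p.1.2 && M p.2) s /\
      v = \sum_(p <- s) p.1.1 *: (act p.1.2 p.2 - p.2).

(* H_0(G, M / N) = 0 for the quotient of a submodule M by a submodule N
   (written out on representatives): every element of M is, modulo N,
   a linear combination of elements  act x m - m  with x in G, m in M. *)
Definition coinv_quot_zero (F : pzRingType) (GT : Type) (V : lmodType F)
  (G : GT -> bool) (act : GT -> V -> V) (M N : V -> bool) : Prop :=
  forall v, M v ->
    exists s : seq (F * GT * V),
      all (fun p => G p.1.2 && M p.2) s /\
      N (v - \sum_(p <- s) p.1.1 *: (act p.1.2 p.2 - p.2)).

(* Over F_2, X |-> J X maps sp(2g,2) onto the symmetric matrices and turns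
   conjugation by J B J (B symplectic) into the congruence S |-> B S B^T; Y
   corresponds to the alternating S whose entries on the hyperbolic pairs
   (e_k, f_k) sum to zero.  A transvection t_w = 1 + J w w^T satisfies
     t_w S t_w^T - S = (J w)(S w)^T + (S w)(J w)^T + (w^T S w) (J w)(J w)^T.
   Suitable w and basis matrices S produce every e_a e_b^T + e_b e_a^T with
   e_b not the partner of e_a, every sum of two such matrices for partner
   pairs, and, when g >= 2 leaves room for a third index, every e_a e_a^T;
   these span the images of Y and of sp(2g,2).  On U, t_w w - w = J w. *)

From HB Require Import structures.
From mathcomp Require Import all_boot all_order all_algebra all_fingroup.
Set Implicit Arguments. Unset Strict Implicit. Unset Printing Implicit Defensive.
Import GRing.Theory.
Local Open Scope ring_scope.

Section AugmentationSpan.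
Variables (R : pzRingType) (GT : Type) (V : lmodType R).
Variables (G : GT -> bool) (act : GT -> V -> V) (M : V -> bool).

Definition aug_span (v : V) : Prop :=
  exists s : seq (R * GT * V),
    all (fun p => G p.1.2 && M p.2) s /\
    v = \sum_(p <- s) p.1.1 *: (act p.1.2 p.2 - p.2).

Lemma aug_span0 : aug_span 0.
Proof. by exists [::]; rewrite big_nil. Qed.

Lemma aug_spanD u v : aug_span u -> aug_span v -> aug_span (u + v).
Proof.
by move=> [s [Gs ->]] [t [Gt ->]]; exists (s ++ t); rewrite all_cat Gs Gt big_cat.
Qed.

Lemma aug_spanZ c v : aug_span v -> aug_span (c *: v).
Proof.
move=> [s [Gs ->]]; exists [seq (c * p.1.1, p.1.2, p.2) | p <- s]; split.
  by rewrite all_map.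
by rewrite big_map scaler_sumr; apply: eq_bigr => p _; rewrite scalerA.
Qed.

Lemma aug_span_addl u v : aug_span u -> aug_span (u + v) -> aug_span v.
Proof.
move=> Su Suv; rewrite -(addKr u v) -scaleN1r.
by apply: aug_spanD => //; apply: aug_spanZ.
Qed.

Lemma aug_span_addr u v : aug_span u -> aug_span (v + u) -> aug_span v.
Proof. by rewrite addrC; apply: aug_span_addl. Qed.

Lemma aug_span_sum (I : Type) (r : seq I) (P : pred I) (F : I -> V) :
  (forall i, P i -> aug_span (F i)) -> aug_span (\sum_(i <- r | P i) F i).
Proof. by move=> SF; apply: big_ind => //; [apply: aug_span0 | apply: aug_spanD]. Qed.

Lemma aug_span_sum_shift (I : Type) (r : seq I) (P : pred I) (c d : I -> R)
    (X : I -> V) (Y : V) :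
  \sum_(i <- r | P i) c i * d i = 0 -> (forall i, aug_span (X i + d i *: Y)) ->
  aug_span (\sum_(i <- r | P i) c i *: X i).
Proof.
move=> cd0 SXY; have -> : \sum_(i <- r | P i) c i *: X i =
    \sum_(i <- r | P i) c i *: (X i + d i *: Y).
  under [RHS]eq_bigr do rewrite scalerDr scalerA.
  by rewrite big_split /= -scaler_suml cd0 scale0r addr0.
by apply: aug_span_sum => i _; apply/aug_spanZ/SXY.
Qed.

Lemma aug_span_diff x m : G x -> M m -> aug_span (act x m - m).
Proof.
by move=> Gx Mm; exists [:: (1, x, m)]; rewrite /= Gx Mm big_seq1 scale1r.
Qed.

End AugmentationSpan.

Lemma coinv_zero_quot (R : pzRingType) (GT : Type) (V : lmodType R)
    (G : GT -> bool) (act : GT -> V -> V) (M N : V -> bool) :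
  N 0 -> coinv_zero G act M -> coinv_quot_zero G act M N.
Proof. by move=> N0 h v /h [s [Gs vE]]; exists s; rewrite -vE subrr. Qed.

Lemma aug_span_subset (R : pzRingType) (GT : Type) (V : lmodType R)
    (G : GT -> bool) (act : GT -> V -> V) (M M' : V -> bool) v :
  (forall m, M m -> M' m) -> aug_span G act M v -> aug_span G act M' v.
Proof.
move=> sMM' [s [Gs ->]]; exists s; split=> //.
by apply: sub_all Gs => p /andP[-> /sMM'].
Qed.

Lemma aug_span_linear (R : pzRingType) (GT GT' : Type) (V V' : lmodType R)
    (G : GT -> bool) (act : GT -> V -> V) (M : V -> bool)
    (G' : GT' -> bool) (act' : GT' -> V' -> V') (M' : V' -> bool)
    (h : GT -> GT') (f : {linear V -> V'}) v :
  (forall x, G x -> G' (h x)) -> (forall m, M m -> M' (f m)) ->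
  (forall x m, G x -> act' (h x) (f m) = f (act x m)) ->
  aug_span G act M v -> aug_span G' act' M' (f v).
Proof.
move=> Gh Mf hf [s [Gs ->]].
exists [seq (p.1.1, h p.1.2, f p.2) | p <- s]; split.
  by rewrite all_map; apply: sub_all Gs => p /andP[/Gh ? /Mf ?]; apply/andP.
elim: s Gs => [|p s IH]; first by rewrite !big_nil raddf0.
rewrite map_cons !big_cons => /andP[/andP[Gp _] Gs].
by rewrite linearD -IH // linearZ linearB hf.
Qed.

Lemma F2_pchar : 2 \in [pchar 'F_2].
Proof. exact: pchar_Fp. Qed.

Lemma F2_addrr (V : lmodType 'F_2) (v : V) : v + v = 0.
Proof. by rewrite -mulr2n -scaler_nat (pcharf0 F2_pchar) scale0r. Qed.

Lemma F2_oppr (V : lmodType 'F_2) (v : V) : - v = v.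
Proof. by rewrite -[LHS]add0r -(F2_addrr v) addrK. Qed.

Section OuterProducts.
Variables (R : comPzRingType) (n : nat).
Implicit Types (x y z v w : 'cV[R]_n) (B S : 'M[R]_n) (a b c : 'I_n).

Lemma trmx11 (C : 'M[R]_1) : C^T = C.
Proof. by rewrite [C]mx11_scalar tr_scalar_mx. Qed.

Definition symm_outer x y : 'M[R]_n := x *m y^T + y *m x^T.

Definition cong B S : 'M[R]_n := B *m S *m B^T.

Lemma symm_outerC x y : symm_outer x y = symm_outer y x.
Proof. exact: addrC. Qed.

Lemma symm_outerDl x x' y :
  symm_outer (x + x') y = symm_outer x y + symm_outer x' y.
Proof. by rewrite /symm_outer mulmxDl linearD /= mulmxDr addrACA. Qed.

Lemma symm_outerDr x y y' :
  symm_outer x (y + y') = symm_outer x y + symm_outer x y'.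
Proof. by rewrite symm_outerC symm_outerDl !(symm_outerC _ x). Qed.

Lemma symm_outerDD x x' y y' :
  symm_outer (x + x') (y + y') =
    symm_outer x y + symm_outer x' y' + (symm_outer x y' + symm_outer x' y).
Proof. by rewrite symm_outerDl !symm_outerDr [symm_outer x' y + _]addrC addrACA. Qed.

Lemma tr_symm_outer x y : (symm_outer x y)^T = symm_outer x y.
Proof. by rewrite /symm_outer linearD /= !trmx_mul !trmxK addrC. Qed.

Lemma tr_outer x : (x *m x^T)^T = x *m x^T.
Proof. by rewrite trmx_mul trmxK. Qed.

Lemma mul_symm_outer x y z :
  symm_outer x y *m z = x *m (y^T *m z) + y *m (x^T *m z).
Proof. by rewrite /symm_outer mulmxDl !mulmxA. Qed.

Lemma outer_addD x y :
  (x + y) *m (x + y)^T = x *m x^T + y *m y^T + symm_outer x y.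
Proof.
by rewrite linearD /= mulmxDl !mulmxDr /symm_outer [y *m x^T + _]addrC addrACA.
Qed.

Lemma symm_outer_outerD x y z :
  symm_outer (x + y) z + (x + y) *m (x + y)^T =
    symm_outer x z + x *m x^T + (symm_outer y z + symm_outer x y + y *m y^T).
Proof.
rewrite symm_outerDl outer_addD -[x *m x^T + _ + _]addrA addrACA.
by congr (_ + _); rewrite addrA addrAC.
Qed.

Lemma cong_rank1_sub v w S : S^T = S ->
  cong (1%:M + v *m w^T) S - S =
    symm_outer v (S *m w) + v *m (w^T *m S *m w) *m v^T.
Proof.
move=> sS; have wS : w^T *m S = (S *m w)^T by rewrite trmx_mul sS.
rewrite /cong /symm_outer linearD /= trmx1 trmx_mul trmxK.
rewrite mulmxDl mul1mx !mulmxDr !mulmx1 mulmxDl -(addrA S) [_ - S]addrC addKr addrA.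
by congr (_ + _ + _); rewrite -?wS !mulmxA.
Qed.

Definition ev a : 'cV[R]_n := delta_mx a 0.

Lemma tr_ev_mul a b : (ev a)^T *m ev b = (a == b)%:R%:M.
Proof.
rewrite /ev trmx_delta mul_delta_mx_cond; apply/matrixP => i j.
by rewrite !ord1 !mxE eqxx /=; case: (a == b); rewrite ?mulr1n ?mulr0n !mxE.
Qed.

Lemma ev_mul_tr a b : ev a *m (ev b)^T = delta_mx a b.
Proof. by rewrite /ev trmx_delta mul_delta_mx. Qed.

Lemma symm_outer_ev a b : symm_outer (ev a) (ev b) = delta_mx a b + delta_mx b a.
Proof. by rewrite /symm_outer !ev_mul_tr. Qed.

Lemma mul_symm_outer_ev a b c :
  symm_outer (ev a) (ev b) *m ev c = (b == c)%:R *: ev a + (a == c)%:R *: ev b.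
Proof. by rewrite mul_symm_outer !tr_ev_mul !mul_mx_scalar. Qed.

Lemma symmetric_decomp S : S^T = S ->
  S = \sum_(a < n) \sum_(b < n) ((a < b)%N%:R * S a b) *: symm_outer (ev a) (ev b)
      + \sum_(a < n) S a a *: delta_mx a a.
Proof.
move=> sS; set U := \matrix_(i, j) ((i < j)%N%:R * S i j).
have UE : U = \sum_(a < n) \sum_(b < n) ((a < b)%N%:R * S a b) *: delta_mx a b.
  rewrite {1}[U]matrix_sum_delta; apply: eq_bigr => a _.
  by apply: eq_bigr => b _; rewrite mxE.
have -> : \sum_(a < n) \sum_(b < n) ((a < b)%N%:R * S a b) *:
    symm_outer (ev a) (ev b) = U + U^T.
  rewrite UE linear_sum -big_split; apply: eq_bigr => a _ /=.
  rewrite linear_sum -big_split; apply: eq_bigr => b _ /=.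
  by rewrite symm_outer_ev scalerDr linearZ /= trmx_delta.
have -> : \sum_(a < n) S a a *: delta_mx a a = diag_mx (\row_a S a a).
  by rewrite diag_mx_sum_delta; apply: eq_bigr => a _; rewrite mxE.
apply/matrixP => i j; rewrite !mxE.
case: (ltngtP i j) => [ij|ji|/val_inj ->]; rewrite ?mul1r ?mul0r ?eqxx ?addr0 ?add0r //.
- by rewrite -val_eqE (ltn_eqF ij) addr0.
- by rewrite -val_eqE (gtn_eqF ji) addr0 -{1}sS mxE.
Qed.

End OuterProducts.

Lemma symm_outer_quad n (x y w : 'cV['F_2]_n) : w^T *m symm_outer x y *m w = 0.
Proof.
rewrite /symm_outer mulmxDr mulmxDl !mulmxA -[w^T *m y *m x^T *m w]trmx11.
by rewrite !trmx_mul !trmxK !mulmxA F2_addrr.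
Qed.

Section Symplectic.
Variable g : nat.
Local Notation n := (g + g).
Local Notation J := (Jform g).
Local Notation e := (@ev 'F_2 n).
Local Notation YJ := (fun S => in_Y (Jform g *m S)).
Local Notation spJ := (fun S => in_sp (Jform g *m S)).
Local Notation spanY := (aug_span (@inSp g) (@cong _ n) YJ).
Local Notation spanSym := (aug_span (@inSp g) (@cong _ n) spJ).
Implicit Types (B S : 'M['F_2]_n) (w x : 'cV['F_2]_n) (a b c k : 'I_n).

Lemma JformE : J = block_mx 0 1%:M 1%:M 0.
Proof. by rewrite /Jform F2_oppr. Qed.

Lemma tr_Jform : J^T = J.
Proof. by rewrite JformE tr_block_mx !trmx0 trmx1. Qed.

Lemma mulJJ : J *m J = 1%:M.
Proof.
by rewrite JformE mulmx_block !mul0mx !mulmx0 !mul1mx !addr0 !add0r scalar_mx_block.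
Qed.

Lemma mulJJmx m (C : 'M['F_2]_(n, m)) : J *m (J *m C) = C.
Proof. by rewrite mulmxA mulJJ mul1mx. Qed.

Lemma mulmxJJ m (C : 'M['F_2]_(m, n)) : C *m J *m J = C.
Proof. by rewrite -mulmxA mulJJ mulmx1. Qed.

Lemma Jform_alt x : x^T *m J *m x = 0.
Proof.
rewrite -[x]vsubmxK tr_col_mx JformE mul_row_block !mulmx0 !mulmx1 !add0r !addr0.
by rewrite mul_row_col -[(usubmx x)^T *m _]trmx11 trmx_mul trmxK F2_addrr.
Qed.

Lemma inSp_conjJ B : inSp B -> inSp (J *m B *m J).
Proof.
move/eqP=> sB; apply/eqP; rewrite !trmx_mul tr_Jform.
transitivity (J *m (B^T *m (J *m J *m J) *m B) *m J); first by rewrite !mulmxA.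
by rewrite mulJJ mul1mx sB mulJJ mul1mx.
Qed.

Lemma conj_act_conjJ B S : inSp B ->
  conj_act (J *m B *m J) (J *m S) = J *m cong B S.
Proof.
move/eqP=> sB; have BA1 : B^T *m (J *m B *m J) = 1%:M.
  by rewrite !mulmxA sB mulJJ.
have [_ uA] := mulmx1_unit BA1.
have invA : invmx (J *m B *m J) = B^T.
  by rewrite -[invmx _]mul1mx -BA1 -[_ *m invmx _]mulmxA mulmxV // mulmx1.
by rewrite /conj_act invA /cong !mulmxA mulmxJJ.
Qed.

Definition transv w : 'M['F_2]_n := 1%:M + J *m w *m w^T.

Lemma transv_inSp w : inSp (transv w).
Proof.
apply/eqP; rewrite /transv [(_ + _)^T]linearD /= trmx1 !trmx_mul trmxK tr_Jform.
rewrite mulmxDl mul1mx !mulmxDr mulmx1 !mulmxA !mulmxDl !mulmxJJ mulJJ mul1mx.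
rewrite -(mulmxA w w^T) -(mulmxA w (w^T *m J)) Jform_alt mulmx0 mul0mx addr0.
by rewrite -addrA F2_addrr addr0.
Qed.

Definition partner a : 'I_n :=
  match split a with inl k => rshift g k | inr k => lshift g k end.

Lemma partner_lshift (k : 'I_g) : partner (lshift g k) = rshift g k.
Proof. by rewrite /partner -[lshift g k]/(unsplit (inl k)) unsplitK. Qed.

Lemma partner_rshift (k : 'I_g) : partner (rshift g k) = lshift g k.
Proof. by rewrite /partner -[rshift g k]/(unsplit (inr k)) unsplitK. Qed.

Lemma partnerK : involutive partner.
Proof.
move=> a; case: (split_ordP a) => k ->;
  by rewrite ?partner_lshift ?partner_rshift ?partner_lshift.
Qed.

Lemma Jform_ev a : J *m e a = e (partner a).
Proof.
rewrite /ev -colE JformE; apply/matrixP => i j.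
rewrite [in LHS]mxE [in RHS]mxE ord1 eqxx andbT.
case: (split_ordP a) => k ->; case: (split_ordP i) => l ->;
  rewrite ?partner_lshift ?partner_rshift ?block_mxEul ?block_mxEur
          ?block_mxEdl ?block_mxEdr !mxE ?eq_shift //.
Qed.

Lemma Jform_mulE S :
  J *m S = block_mx (dlsubmx S) (drsubmx S) (ulsubmx S) (ursubmx S).
Proof. by rewrite -{1}[S]submxK JformE mulmx_block !mul0mx !mul1mx !add0r !addr0. Qed.

Lemma in_sp_Jform_mul S : in_sp (J *m S) = (S^T == S).
Proof.
rewrite /in_sp /symmetricb Jform_mulE block_mxKul block_mxKur block_mxKdl block_mxKdr.
apply/and3P/eqP => [[/eqP urS /eqP drS /eqP ulS]|sS].
  by rewrite -[S]submxK tr_block_mx; congr block_mx; rewrite // urS trmxK.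
by rewrite trmx_dlsub trmx_drsub trmx_ulsub sS !eqxx.
Qed.

Lemma in_Y_Jform_mul S : in_Y (J *m S) =
  [&& S^T == S, [forall i, S i i == 0]
    & \sum_(k < g) S (rshift g k) (lshift g k) == 0].
Proof.
rewrite /in_Y in_sp_Jform_mul Jform_mulE block_mxKul block_mxKur block_mxKdl.
have -> : \tr (dlsubmx S) = \sum_(k < g) S (rshift g k) (lshift g k).
  by apply: eq_bigr => k _; rewrite !mxE.
suff -> : [forall i, S i i == 0] = diag_zero (drsubmx S) && diag_zero (ulsubmx S).
  by rewrite -andbA.
apply/forallP/andP => [S0|[/forallP dr0 /forallP ul0] i].
  by split; apply/forallP => k; rewrite !mxE S0.
by case: (split_ordP i) => k ->; [have := ul0 k | have := dr0 k]; rewrite !mxE.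
Qed.

Lemma in_Y_symm_outer_ev a b : b != partner a ->
  in_Y (J *m symm_outer (e a) (e b)).
Proof.
move=> b_a'; rewrite in_Y_Jform_mul tr_symm_outer eqxx symm_outer_ev /=.
apply/andP; split.
  by apply/forallP => i; rewrite !mxE andbC (addrr_pchar2 F2_pchar).
rewrite big1 // => k _; rewrite !mxE.
have no_pair (c d : 'I_n) :
    d != partner c -> (rshift g k == c) && (lshift g k == d) = false.
  move=> d_c'; apply: contraNF d_c' => /andP[/eqP <- /eqP <-].
  by rewrite partner_rshift.
rewrite !no_pair ?addr0 //.
by apply: contra b_a' => /eqP ->; rewrite partnerK.
Qed.

Lemma aug_span_transv (P : 'M['F_2]_n -> bool) w S : P S -> S^T = S ->
  aug_span (@inSp g) (@cong _ n) P
    (symm_outer (J *m w) (S *m w) + J *m w *m (w^T *m S *m w) *m (J *m w)^T).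
Proof.
by move=> PS sS; rewrite -cong_rank1_sub //; exact: aug_span_diff (transv_inSp w) PS.
Qed.

Lemma aug_span_transv_alt (P : 'M['F_2]_n -> bool) w x y : P (symm_outer x y) ->
  aug_span (@inSp g) (@cong _ n) P (symm_outer (J *m w) (symm_outer x y *m w)).
Proof.
move=> PS; have := aug_span_transv w PS (tr_symm_outer x y).
by rewrite symm_outer_quad mulmx0 mul0mx addr0.
Qed.

Lemma spanY_symm_outer_ev a b : b != partner a -> spanY (symm_outer (e a) (e b)).
Proof.
move=> b_a'; have [<-|ab] := eqVneq a b.
  by rewrite /symm_outer F2_addrr; apply: aug_span0.
have YS : in_Y (J *m symm_outer (e (partner a)) (e b)).
  by apply: in_Y_symm_outer_ev; rewrite partnerK eq_sym.
have := aug_span_transv_alt (P := YJ) (e (partner a)) YS.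
rewrite Jform_ev partnerK mul_symm_outer_ev eqxx (negbTE b_a').
by rewrite scale0r add0r scale1r.
Qed.

Lemma spanY_pairD a c : c != a -> c != partner a ->
  spanY (symm_outer (e a) (e (partner a)) + symm_outer (e c) (e (partner c))).
Proof.
move=> c_a c_a'; have a_c : a != c by rewrite eq_sym.
have Sw : symm_outer (e a) (e c) *m (e a + e c) = e a + e c.
  rewrite mulmxDr !mul_symm_outer_ev !eqxx (negbTE c_a) (negbTE a_c).
  by rewrite !scale0r !scale1r addr0 add0r; apply: addrC.
have := aug_span_transv_alt (P := YJ) (e a + e c) (in_Y_symm_outer_ev c_a').
rewrite Sw mulmxDr !Jform_ev symm_outerDD.
rewrite (symm_outerC (e (partner a))) (symm_outerC (e (partner c))).
by apply: aug_span_addr; apply: aug_spanD; apply: spanY_symm_outer_ev;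
  rewrite partnerK // eq_sym.
Qed.

Lemma spanY_spanSym S : spanY S -> spanSym S.
Proof. by apply: aug_span_subset => X /and4P[]. Qed.

Lemma in_sp_outer w : in_sp (J *m (w *m w^T)).
Proof. by rewrite in_sp_Jform_mul tr_outer. Qed.

Lemma spanSym_pairD_delta a :
  spanSym (symm_outer (e a) (e (partner a)) + delta_mx a a).
Proof.
set a' := partner a.
have Sw : e a' *m (e a')^T *m e a' = e a' by rewrite -mulmxA tr_ev_mul eqxx mulmx1.
have q1 : (e a')^T *m (e a' *m (e a')^T) *m e a' = 1%:M.
  by rewrite mulmxA tr_ev_mul eqxx mul1mx tr_ev_mul eqxx.
have := @aug_span_transv spJ (e a') _ (in_sp_outer (e a')) (tr_outer _).
by rewrite Sw q1 mulmx1 Jform_ev partnerK ev_mul_tr.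
Qed.

Lemma spanSym_delta a k : k != a -> k != partner a -> spanSym (delta_mx a a).
Proof.
move=> k_a k_a'; set a' := partner a; set k' := partner k.
have Sw : e k *m (e k)^T *m (e k + e a') = e k.
  by rewrite -mulmxA mulmxDr !tr_ev_mul eqxx (negbTE k_a') raddf0 addr0 mulmx1.
have q1 : (e k + e a')^T *m (e k *m (e k)^T) *m (e k + e a') = 1%:M.
  rewrite -mulmxA Sw [(_ + _)^T]linearD mulmxDl !tr_ev_mul eqxx.
  by rewrite eq_sym (negbTE k_a') raddf0 addr0.
have := @aug_span_transv spJ (e k + e a') _ (in_sp_outer (e k)) (tr_outer _).
rewrite Sw q1 mulmx1 mulmxDr !Jform_ev partnerK symm_outer_outerD => Sd.
have := spanSym_pairD_delta k'; rewrite partnerK -ev_mul_tr => Sk.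
have SY : spanSym (symm_outer (e a) (e k) + symm_outer (e k') (e a)).
  apply: aug_spanD; apply/spanY_spanSym/spanY_symm_outer_ev => //.
  by rewrite partnerK eq_sym.
by rewrite -ev_mul_tr; apply: aug_span_addl SY (aug_span_addl Sk Sd).
Qed.

Lemma exists_nonpartner a : (1 < g)%N -> exists2 k, k != a & k != partner a.
Proof.
move=> g1; have g0 : (0 < g)%N by apply: ltn_trans g1.
set l0 := lshift g (Ordinal g0); set l1 := lshift g (Ordinal g1).
have l1_l0 : l1 != l0 by rewrite eq_shift.
have l1_l0' : l1 != partner l0 by rewrite partner_lshift eq_shift.
have [<-|l0_a] := eqVneq l0 a; first by exists l1.
have [l0_a'|l0_a'] := eqVneq l0 (partner a); last by exists l0.
by exists l1; rewrite -?l0_a' // -(partnerK a) -l0_a'.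
Qed.

Lemma sum_upper_partner S :
  \sum_(a < n) \sum_(b < n) ((a < b)%N%:R * S a b) * (b == partner a)%:R =
    \sum_(k < g) S (lshift g k) (rshift g k).
Proof.
under eq_bigr => a _.
  rewrite (bigD1 (partner a)) //= eqxx mulr1 big1 ?addr0; last first.
    by move=> b /negbTE ->; rewrite mulr0.
  over.
rewrite big_split_ord /= [X in _ + X]big1 ?addr0 => [|k _]; last first.
  by rewrite partner_rshift /= ltnNge leq_addl mul0r.
apply: eq_bigr => k _; rewrite partner_lshift /=.
by rewrite (leq_trans (ltn_ord k) (leq_addr _ _)) mul1r.
Qed.

Lemma spanY_symm_outer_shift l a b :
  spanY (symm_outer (e a) (e b) +
         (b == partner a)%:R *: symm_outer (e l) (e (partner l))).
Proof.
have [->|b_a'] := eqVneq b (partner a); last first.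
  by rewrite scale0r addr0; apply: spanY_symm_outer_ev.
rewrite scale1r; have [<-|l_a] := eqVneq l a.
  by rewrite F2_addrr; apply: aug_span0.
have [->|l_a'] := eqVneq l (partner a).
  by rewrite partnerK symm_outerC F2_addrr; apply: aug_span0.
exact: spanY_pairD.
Qed.

(* The pair coefficients of S sum to its trace condition, so each hyperbolic
   pair may be traded for its sum with a fixed one (spanY_pairD). *)
Lemma spanY_in_Y S : (0 < g)%N -> in_Y (J *m S) -> spanY S.
Proof.
move=> g0; rewrite in_Y_Jform_mul => /and3P[/eqP sS /forallP S0 /eqP trS].
rewrite (symmetric_decomp sS).
have -> : \sum_(a < n) S a a *: delta_mx a a = 0.
  by apply: big1 => a _; rewrite (eqP (S0 a)) scale0r.
set l0 := lshift g (Ordinal g0).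
rewrite addr0 pair_big.
apply: (aug_span_sum_shift (d := fun p => (p.2 == partner p.1)%:R)
          (Y := symm_outer (e l0) (e (partner l0)))) => [|p]; last first.
  exact: spanY_symm_outer_shift.
rewrite -(pair_big predT predT
           (fun a b => (a < b)%N%:R * S a b * (b == partner a)%:R)).
rewrite sum_upper_partner -[RHS]trS; apply: eq_bigr => k _.
by rewrite -[in LHS]sS mxE.
Qed.

Lemma spanSym_in_sp S : (1 < g)%N -> in_sp (J *m S) -> spanSym S.
Proof.
move=> g1; rewrite in_sp_Jform_mul => /eqP sS.
have Sdelta a : spanSym (delta_mx a a).
  by have [k k_a k_a'] := exists_nonpartner a g1; apply: spanSym_delta k_a k_a'.
rewrite (symmetric_decomp sS); apply: aug_spanD; last first.
  by apply: aug_span_sum => a _; apply/aug_spanZ/Sdelta.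
apply: aug_span_sum => a _; apply: aug_span_sum => b _; apply: aug_spanZ.
have [->|b_a'] := eqVneq b (partner a).
  exact: aug_span_addr (Sdelta a) (spanSym_pairD_delta a).
exact/spanY_spanSym/spanY_symm_outer_ev.
Qed.

Lemma aug_span_conj_act (P : 'M['F_2]_n -> bool) S :
  aug_span (@inSp g) (@cong _ n) (fun X => P (J *m X)) S ->
  aug_span (@inSp g) (@conj_act g) P (J *m S).
Proof.
apply: (aug_span_linear (h := fun B => J *m B *m J) (f := mulmx J)) => //.
  exact: inSp_conjJ.
by move=> B X; apply: conj_act_conjJ.
Qed.

Lemma in_Y0 : in_Y (0 : 'M['F_2]_n).
Proof.
rewrite -(mulmx0 _ J) in_Y_Jform_mul trmx0 eqxx big1 => [|k _]; last by rewrite mxE.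
by rewrite eqxx andbT; apply/forallP => i; rewrite mxE.
Qed.

Lemma coinv_zero_Y : (0 < g)%N -> coinv_zero (@inSp g) (@conj_act g) (@in_Y g).
Proof.
move=> g0 X YX; rewrite -[X]mulJJmx; apply/aug_span_conj_act/spanY_in_Y => //.
by rewrite mulJJmx.
Qed.

Lemma coinv_zero_sp : (1 < g)%N -> coinv_zero (@inSp g) (@conj_act g) (@in_sp g).
Proof.
move=> g1 X spX; rewrite -[X]mulJJmx; apply/aug_span_conj_act/spanSym_in_sp => //.
by rewrite mulJJmx.
Qed.

Lemma aug_span_nat_act u : aug_span (@inSp g) (@nat_act g) (fun _ => true) u.
Proof.
have span_e a : aug_span (@inSp g) (@nat_act g) (fun _ => true) (e a).
  have := @aug_span_diff _ _ _ (@inSp g) (@nat_act g) (fun _ => true) _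
    (e (partner a)) (transv_inSp (e (partner a))) isT.
  rewrite /nat_act /transv mulmxDl mul1mx.
  rewrite -[J *m _ *m _ *m _]mulmxA tr_ev_mul eqxx mulmx1.
  by rewrite Jform_ev partnerK addrC addKr.
rewrite [u]matrix_sum_delta; apply: aug_span_sum => a _.
by apply: aug_span_sum => j _; rewrite ord1; apply/aug_spanZ/span_e.
Qed.

End Symplectic.

Theorem lemma5p5 :
  (forall g : nat, (1 <= g)%N ->
     coinv_zero (@inSp g) (@conj_act g) (@in_Y g) /\
     coinv_zero (@inSp g) (@nat_act g) (fun _ => true)) /\
  (forall g : nat, (2 <= g)%N ->
     coinv_quot_zero (@inSp g) (@conj_act g) (@in_sp g) (@in_Y g) /\
     coinv_zero (@inSp g) (@conj_act g) (@in_sp g)).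
Proof.
split=> g g_ge; split.
- exact: coinv_zero_Y.
- by move=> u _; apply: aug_span_nat_act.
- exact/coinv_zero_quot/coinv_zero_sp/g_ge/in_Y0.
- exact: coinv_zero_sp.
Qed.
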